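(* Let $S$ be a finite set, let $p:2^{S}\to\mathbb{Z}\cup\{-\infty\}$ be fully supermodular with $p(\emptyset)=0$ and $p(S)$ finite, and let $B=B'(p)$. Let $f:S\to\mathbb{Z}\cup\{-\infty\}$ and $g:S\to\mathbb{Z}\cup\{+\infty\}$ with $f\le g$, let $T(f,g)=\{x\in\mathbb{R}^S: f\le x\le g\}$, and suppose $B^{\square}:=B\cap T(f,g)$ is non-empty; let $p^{\square}$ be the fully supermodular function with $B^{\square}=B'(p^{\square})$. Let $m\in B^{\square}\cap\mathbb{Z}^S$ and $u\in S$. Let $T_m(u)$ be the smallest $m$-tight set with respect to $p$ containing $u$, and $T^{\square}_m(u)$ the smallest $m$-tight set with respect to $p^{\square}$ containing $u$. Then $T^{\square}_m(u)=\{u\}$ if $m(u)=f(u)$, and $T^{\square}_m(u)=T_m(u)-\{v\in S-\{u\}: m(v)=g(v)\}$ if $m(u)>f(u)$.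
   Context: For $x\in\mathbb{R}^{S}$, $\widetilde x(Z)=\sum_{s\in Z}x(s)$. $B'(p)=\{x\in\mathbb{R}^{S}:\widetilde x(S)=p(S),\ \widetilde x(Z)\ge p(Z)\ \forall Z\subset S\}$, an integral base-polyhedron. A set $X\subseteq S$ is $m$-tight with respect to $p$ if $\widetilde m(X)=p(X)$; for fully supermodular $p$ and $m\in B'(p)$ the $m$-tight sets are closed under union and intersection, so a smallest $m$-tight set containing $u$ exists; it equals $\{s\in S: m+\chi_s-\chi_u\in B'(p)\}$, where $\chi_s$ is the unit vector of $s$. *)

From mathcomp Require Import all_boot all_order all_algebra.
From mathcomp Require Import reals.
Set Implicit Arguments. Unset Strict Implicit. Unset Printing Implicit Defensive.
Import Order.TTheory GRing.Theory Num.Theory.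
Local Open Scope ring_scope.

(* Values in Z ∪ {-oo} (for p and f) are encoded as [option int] with
   [None] = -oo; values in Z ∪ {+oo} (for g) as [option int] with [None] = +oo. *)

Definition fully_supermodular (S : finType) (p : {set S} -> option int) : Prop :=
  forall X Y a b, p X = Some a -> p Y = Some b ->
    exists c d, p (X :&: Y) = Some c /\ p (X :|: Y) = Some d /\ a + b <= c + d.

Definition xsum (R : realType) (S : finType) (x : S -> R) (Z : {set S}) : R :=
  \sum_(s in Z) x s.

Definition ge_low (R : realType) (y : R) (a : option int) : Prop :=
  match a with Some k => k%:~R <= y | None => True end.

Definition le_up (R : realType) (y : R) (a : option int) : Prop :=
  match a with Some k => y <= k%:~R | None => True end.

Definition Bp (R : realType) (S : finType) (p : {set S} -> option int)
    (x : S -> R) : Prop :=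
  (exists k, p [set: S] = Some k /\ xsum x [set: S] = k%:~R) /\
  (forall Z : {set S}, ge_low (xsum x Z) (p Z)).

Definition Tfg (R : realType) (S : finType) (f g : S -> option int)
    (x : S -> R) : Prop :=
  forall s, ge_low (x s) (f s) /\ le_up (x s) (g s).

Definition fle (S : finType) (f g : S -> option int) : Prop :=
  forall s a b, f s = Some a -> g s = Some b -> a <= b.

Definition mtight (S : finType) (p : {set S} -> option int) (m : S -> int)
    (X : {set S}) : bool :=
  p X == Some (\sum_(s in X) m s).

(* the smallest m-tight set containing u: the intersection of all of them *)
Definition Tm (S : finType) (p : {set S} -> option int) (m : S -> int) (u : S)
    : {set S} :=
  \bigcap_(X : {set S} | mtight p m X && (u \in X)) X.

From mathcomp Require Import all_boot all_order all_algebra.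
From mathcomp Require Import reals.
Set Implicit Arguments. Unset Strict Implicit. Unset Printing Implicit Defensive.
Import Order.TTheory GRing.Theory Num.Theory.
Local Open Scope ring_scope.

(* For s <> u, s lies in the smallest m-tight set containing u iff no m-tight
   set contains u but not s, i.e. (by integrality) iff the exchanged vector
   m + chi_s - chi_u still lies in B'(p).  As B'(p^box) = B'(p) /\ T(f,g) and
   m is already in T(f,g), the exchanged vector stays in the box iff
   m(u) > f(u) and m(s) < g(s). *)

Lemma xsum_intr (R : realType) (S : finType) (x : S -> int) (Z : {set S}) :
  xsum (fun t => (x t)%:~R : R) Z = (\sum_(t in Z) x t)%:~R.
Proof. by rewrite /xsum raddf_sum. Qed.

Lemma ge_low_intr (R : realType) (k : int) (a : option int) :
  ge_low (k%:~R : R) a <-> (forall j, a = Some j -> j <= k).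
Proof. by case: a => [j|] /=; rewrite ?ler_int; split=> // [+ _ [<-] | /(_ j erefl)]. Qed.

Lemma le_up_intr (R : realType) (k : int) (a : option int) :
  le_up (k%:~R : R) a <-> (forall j, a = Some j -> k <= j).
Proof. by case: a => [j|] /=; rewrite ?ler_int; split=> // [+ _ [<-] | /(_ j erefl)]. Qed.

Section Exchange.

Variable S : finType.
Implicit Types (m : S -> int) (s t u : S) (Z : {set S}).

Definition exchange m s u : S -> int :=
  fun t => m t + (t == s)%:Z - (t == u)%:Z.

Lemma sum_indicator Z s : \sum_(t in Z) (t == s)%:Z = (s \in Z)%:Z.
Proof.
have [sZ | sNZ] := boolP (s \in Z).
  by rewrite (bigD1 s) //= eqxx big1 ?addr0 // => t /andP[_ /negbTE ->].
by rewrite big1 // => t tZ; case: eqP => // ets; rewrite -ets tZ in sNZ.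
Qed.

Lemma sum_exchange m s u Z :
  \sum_(t in Z) exchange m s u t = \sum_(t in Z) m t + (s \in Z)%:Z - (u \in Z)%:Z.
Proof. by rewrite !big_split /= sumrN !sum_indicator. Qed.

Lemma exchange_src m s u : s != u -> exchange m s u s = m s + 1.
Proof. by move=> su; rewrite /exchange eqxx (negbTE su) subr0. Qed.

Lemma exchange_dst m s u : s != u -> exchange m s u u = m u - 1.
Proof. by move=> su; rewrite /exchange eqxx eq_sym (negbTE su) addr0. Qed.

Lemma exchange_other m s u t : t != s -> t != u -> exchange m s u t = m t.
Proof. by move=> /negbTE ts /negbTE tu; rewrite /exchange ts tu addr0 subr0. Qed.

Lemma mem_Tm (p : {set S} -> option int) m u : u \in Tm p m u.
Proof. by apply/bigcapP => X /andP[]. Qed.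

Lemma Tm_exchange (R : realType) (p : {set S} -> option int) m u s :
  Bp p (fun t => (m t)%:~R : R) -> s != u ->
  s \in Tm p m u <-> Bp p (fun t => (exchange m s u t)%:~R : R).
Proof.
move=> [[k [pS mS]] mlow] su; split=> [sT | [_ exlow]].
- split=> [|Z].
    by exists k; rewrite xsum_intr sum_exchange !inE addrK -xsum_intr.
  rewrite xsum_intr sum_exchange; apply/ge_low_intr => j pZ.
  have := mlow Z; rewrite xsum_intr => /ge_low_intr/(_ j pZ) jle.
  have [uZ | _] := boolP (u \in Z); last first.
    by apply: le_trans jle _; rewrite subr0 lerDl.
  have [sZ | sNZ] := boolP (s \in Z); first by rewrite addrK.
  rewrite addr0 -ltzD1 subrK lt_neqAle jle andbT.
  apply: contra sNZ => /eqP jE; move/bigcapP: sT; apply.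
  by rewrite uZ andbT /mtight pZ jE.
- apply/bigcapP => X /andP[/eqP pX uX]; apply/negPn/negP => sNX.
  have := exlow X; rewrite xsum_intr sum_exchange => /ge_low_intr/(_ _ pX).
  by rewrite uX (negbTE sNX) addr0 lerBrDr gerDl.
Qed.

Lemma Tfg_exchange (R : realType) (f g : S -> option int) m s u :
  Tfg f g (fun t => (m t)%:~R : R) -> s != u ->
  Tfg f g (fun t => (exchange m s u t)%:~R : R) <->
  (forall a, f u = Some a -> a < m u) /\ g s <> Some (m s).
Proof.
move=> mbox su; split=> [exbox | [fu gs] t].
- split.
    have [/ge_low_intr ulow _] := exbox u.
    by move=> a /ulow; rewrite exchange_dst // -ltzD1 subrK.
  have [_ /le_up_intr sup] := exbox s.
  by move=> /sup; rewrite exchange_src // gerDl.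
have [-> | ts] := eqVneq t s.
  have [/ge_low_intr slow /le_up_intr sup] := mbox s.
  rewrite exchange_src //; split; [apply/ge_low_intr | apply/le_up_intr].
    by move=> j /slow jle; apply: le_trans jle _; rewrite lerDl.
  move=> j gsj; rewrite lezD1 lt_neqAle sup // andbT.
  by apply: contraPneq gs => ->.
have [-> | tu] := eqVneq t u.
  have [_ /le_up_intr uup] := mbox u.
  rewrite exchange_dst //; split; [apply/ge_low_intr | apply/le_up_intr].
    by move=> j /fu; rewrite -ltzD1 subrK.
  by move=> j /uup; apply: le_trans; rewrite gerBl.
by rewrite exchange_other //; apply: mbox.
Qed.

End Exchange.

Theorem claim2p9 (R : realType) (S : finType)
  (p : {set S} -> option int)
  (hp : fully_supermodular p)
  (hp0 : p set0 = Some 0)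
  (hpS : exists k, p [set: S] = Some k)
  (f g : S -> option int)
  (hfg : fle f g)
  (hne : exists x : S -> R, Bp p x /\ Tfg f g x)
  (pb : {set S} -> option int)
  (hpb : fully_supermodular pb)
  (hBb : forall x : S -> R, Bp pb x <-> (Bp p x /\ Tfg f g x))
  (m : S -> int)
  (hm : Bp p (fun s => (m s)%:~R : R) /\ Tfg f g (fun s => (m s)%:~R : R))
  (u : S) :
  (f u = Some (m u) -> Tm pb m u = [set u]) /\
  ((forall a, f u = Some a -> a < m u) ->
     Tm pb m u = Tm p m u :\: [set v | (v != u) && (g v == Some (m v))]).
Proof.
have [mB mbox] := hm.
have mBb : Bp pb (fun s => (m s)%:~R : R) by apply/hBb.
have memTb s : s != u -> s \in Tm pb m u <->
    s \in Tm p m u /\ (forall a, f u = Some a -> a < m u) /\ g s <> Some (m s).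
  move=> su; rewrite (Tm_exchange mBb su) hBb (Tfg_exchange mbox su).
  by rewrite (Tm_exchange mB su).
split=> [fu | fu]; apply/setP => s; rewrite !inE.
- have [-> | su] := eqVneq s u; first exact: mem_Tm.
  by apply/negP => /(memTb s su) [_ [/(_ _ fu)]]; rewrite ltxx.
- have [-> | su] := eqVneq s u; first by rewrite !mem_Tm.
  rewrite [~~ false]/= andTb.
  apply/idP/andP => [/(memTb s su) [sT [_ /eqP gs]] // | [/eqP gs sT]].
  by apply/(memTb s su).
Qed.
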